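(* Let $(\Omega,\mathcal{F})$ be a measurable space, $\mathrm{B}_b$ the space of bounded real-valued measurable functions, $C\subset\mathrm{B}_b$ a linear subspace containing the constants, and $H\colon C\to\mathbb{R}$ a convex map with $H(X+m)=H(X)+m$ for all $X\in C$, $m\in\mathbb{R}$. Then the following are equivalent: (i) $H$ is a monotone premium principle; (ii) $H(0)=0$ and $H(X)\le 0$ for all $X\in C$ with $X\le 0$.
   Context: A premium principle is a map $H\colon C\to\mathbb{R}$ with $H(X+m)=H(X)+m$ for $X\in C$, $m\in\mathbb{R}$, $H(0)=0$, and $H(X)\ge0$ for $X\in C$ with $X\ge0$, where $\le$ is the pointwise order. Monotone means $H(X)\le H(Y)$ whenever $X,Y\in C$, $X\le Y$. Convex means $H(\lambda X+(1-\lambda)Y)\le\lambda H(X)+(1-\lambda)H(Y)$ for $\lambda\in[0,1]$. *)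

From HB Require Import structures.
From mathcomp Require Import all_boot all_order all_algebra.
From mathcomp Require Import all_classical all_reals.
From mathcomp Require Import measure lebesgue_measure.
Set Implicit Arguments. Unset Strict Implicit. Unset Printing Implicit Defensive.
Import Order.TTheory GRing.Theory Num.Theory.
Local Open Scope ring_scope.
Local Open Scope classical_set_scope.

Section Defs.
Context {d : measure_display} {T : measurableType d} {R : realType}.

Definition bounded_measurable (X : T -> R) : Prop :=
  measurable_fun setT X /\ exists M : R, forall w, `|X w| <= M.

Definition linear_subspace_with_constants (C : set (T -> R)) : Prop :=
  [/\ (forall X, C X -> bounded_measurable X),
      (forall m : R, C (fun _ => m)),
      (forall X Y, C X -> C Y -> C (fun w => X w + Y w)) &
      (forall (a : R) X, C X -> C (fun w => a * X w))].

Definition cash_additive_on (C : set (T -> R)) (H : (T -> R) -> R) : Prop :=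
  forall X (m : R), C X -> H (fun w => X w + m) = H X + m.

Definition convex_on (C : set (T -> R)) (H : (T -> R) -> R) : Prop :=
  forall X Y (l : R), C X -> C Y -> 0 <= l <= 1 ->
    H (fun w => l * X w + (1 - l) * Y w) <= l * H X + (1 - l) * H Y.

Definition premium_principle (C : set (T -> R)) (H : (T -> R) -> R) : Prop :=
  [/\ cash_additive_on C H,
      H (fun _ => 0) = 0 &
      (forall X, C X -> (forall w, 0 <= X w) -> 0 <= H X)].

Definition monotone_on (C : set (T -> R)) (H : (T -> R) -> R) : Prop :=
  forall X Y, C X -> C Y -> (forall w, X w <= Y w) -> H X <= H Y.

End Defs.

From HB Require Import structures.
From mathcomp Require Import all_boot all_order all_algebra.
From mathcomp Require Import all_classical all_reals.
From mathcomp Require Import measure lebesgue_measure.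
From mathcomp Require Import ring lra.
Import Order.TTheory GRing.Theory Num.Theory.
Local Open Scope ring_scope.
Local Open Scope classical_set_scope.

(* Only (ii) => monotonicity needs an argument.  Given X <= Y and t in (0, 1],
   the function Z := Y + (X - Y) / t lies in C, satisfies Z <= Y <= sup Y =: M
   and X = (1 - t) Y + t Z.  By (ii) and cash additivity H Z <= M, so convexity
   gives H X <= (1 - t) H Y + t M; letting t -> 0 yields H X <= H Y. *)

Lemma le_of_forall_convex_comb (R : realFieldType) (a b M : R) :
  (forall t, 0 < t <= 1 -> a <= (1 - t) * b + t * M) -> a <= b.
Proof.
move=> le_comb; apply/ler_addgt0Pr => e e_gt0.
have eD_gt0 : 0 < e + `|M - b| by rewrite ltr_wpDr.
set t := e / (e + `|M - b|).
have t_gt0 : 0 < t by rewrite divr_gt0.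
have t_le1 : t <= 1 by rewrite ler_pdivrMr // mul1r lerDl.
have tD_le : t * `|M - b| <= e.
  by rewrite mulrAC ler_pdivrMr // ler_pM2l // lerDr ltW.
have := le_comb t; rewrite t_gt0 t_le1 => /(_ isT) le_at_t.
have : t * (M - b) <= t * `|M - b| by rewrite ler_pM2l // ler_norm.
lra.
Qed.

Section ConvexCashAdditive.
Context {d : measure_display} {T : measurableType d} {R : realType}.
Variables (C : set (T -> R)) (H : (T -> R) -> R).
Hypothesis C_subspace : linear_subspace_with_constants C.
Hypothesis H_cash : cash_additive_on C H.
Hypothesis H_convex : convex_on C H.
Hypothesis H_nonpos : forall X, C X -> (forall w, X w <= 0) -> H X <= 0.

Lemma le_cst_of_pointwise_le X (m : R) :
  C X -> (forall w, X w <= m) -> H X <= m.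
Proof.
have [_ Ccst Cadd _] := C_subspace.
move=> CX le_Xm.
have CXm : C (fun w => X w + - m) by exact: Cadd _ (fun=> - m) CX (Ccst _).
have le_Xm0 w : X w - m <= 0 by rewrite subr_le0.
by have := H_nonpos _ CXm le_Xm0; rewrite H_cash // subr_le0.
Qed.

Lemma le_convex_comb_bound X Y (M t : R) :
  C X -> C Y -> (forall w, X w <= Y w) -> (forall w, Y w <= M) ->
  0 < t <= 1 -> H X <= (1 - t) * H Y + t * M.
Proof.
have [_ _ Cadd Cscale] := C_subspace.
move=> CX CY le_XY le_YM /andP[t_gt0 t_le1].
pose Z w := Y w + t^-1 * (X w + -1 * Y w).
have CZ : C Z.
  by apply: (Cadd) => //; apply: (Cscale); apply: (Cadd) => //; exact: (Cscale).
have le_ZM w : Z w <= M.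
  apply: le_trans (le_YM w); rewrite /Z gerDl.
  by rewrite pmulr_rle0 ?invr_gt0 // mulN1r subr_le0.
have -> : X = fun w => (1 - t) * Y w + (1 - (1 - t)) * Z w.
  by apply: funext => w; rewrite /Z; field; rewrite gt_eqF.
apply: le_trans (H_convex _ _ (1 - t) CY CZ _) _; first by apply/andP; split; lra.
rewrite subKr lerD2l ler_pM2l //.
exact: le_cst_of_pointwise_le.
Qed.

Lemma monotone_of_nonpos : monotone_on C H.
Proof.
have [C_bounded _ _ _] := C_subspace.
move=> X Y CX CY le_XY.
have [_ [M le_absYM]] := C_bounded Y CY.
apply: (@le_of_forall_convex_comb _ _ _ M) => t t01.
apply: le_convex_comb_bound => // w.
exact: le_trans (ler_norm _) (le_absYM w).
Qed.

End ConvexCashAdditive.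

Theorem proposition3p7 (d : measure_display) (T : measurableType d) (R : realType)
  (C : set (T -> R)) (H : (T -> R) -> R) :
  linear_subspace_with_constants C ->
  convex_on C H ->
  cash_additive_on C H ->
  ((premium_principle C H /\ monotone_on C H) <->
   (H (fun _ => 0) = 0 /\
    (forall X, C X -> (forall w, X w <= 0) -> H X <= 0))).
Proof.
move=> C_subspace H_convex H_cash.
have [_ Ccst _ _] := C_subspace.
split=> [[[_ H0 _] H_mono] | [H0 H_nonpos]].
  by split=> // X CX le_X0; rewrite -H0; exact: H_mono.
have H_mono : monotone_on C H by exact: monotone_of_nonpos.
split=> //; split=> // X CX ge_X0.
by rewrite -H0; exact: H_mono.
Qed.
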